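(* Let $n,m\ge 1$, let $A=(a_1,\ldots,a_m)$ be a real $n\times m$ matrix with $a_i\neq 0$ for all $i$, and let $b=(b_1,\ldots,b_m)^\top\in\mathbb{R}^m$ be such that $K=\{x\in\mathbb{R}^n \mid A^\top x\le b\}$ is nonempty. Let $H_i^c=\{x\in\mathbb{R}^n\mid a_i^\top x>b_i\}$ for $i=1,\ldots,m$. For $\varepsilon>0$ put $b_i(\varepsilon)=b_i+\varepsilon^i$, $H_i(\varepsilon)=\{x\mid a_i^\top x\le b_i(\varepsilon)\}$, $\partial H_i(\varepsilon)=\{x\mid a_i^\top x= b_i(\varepsilon)\}$, $K(\varepsilon)=\bigcap_{i=1}^m H_i(\varepsilon)$, $F_i(\varepsilon)=\partial H_i(\varepsilon)\cap K(\varepsilon)$, and $\mathcal{F}(\varepsilon)=\{J\subseteq\{1,\ldots,m\}\mid J\neq\emptyset,\ \bigcap_{i\in J}F_i(\varepsilon)\neq\emptyset\}$, and let $\mathcal{F}(0+)$ denote the common value of $\mathcal{F}(\varepsilon)$ for all sufficiently small $\varepsilon>0$ (which is known to exist). Then for all $x\in\mathbb{R}^n$, \[ \mathbf{1}_{\bigcup_{i=1}^m H_i^c}(x)=\sum_{J\in\mathcal{F}(0+)}(-1)^{|J|-1}\,\mathbf{1}_{\bigcap_{i\in J}H_i^c}(x), \] where $\mathbf{1}_S$ denotes the indicator function of $S$ and $|J|$ the cardinality of $J$. *)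

From mathcomp Require Import all_boot all_order all_algebra.
From mathcomp Require Import reals.
Set Implicit Arguments. Unset Strict Implicit. Unset Printing Implicit Defensive.
Import Order.TTheory GRing.Theory Num.Theory.
Local Open Scope ring_scope.

Definition aTx (R : realType) (n m : nat) (A : 'M[R]_(n, m)) (x : 'cV[R]_n)
  (i : 'I_m) : R := (A^T *m x) i 0.

(* b_i(eps) = b_i + eps^(i+1) : the paper indexes 1..m, ordinals index 0..m-1 *)
Definition b_eps (R : realType) (m : nat) (b : 'cV[R]_m) (eps : R) (i : 'I_m) : R :=
  b i 0 + eps ^+ i.+1.

Definition in_K_eps (R : realType) (n m : nat) (A : 'M[R]_(n, m)) (b : 'cV[R]_m)
  (eps : R) (x : 'cV[R]_n) : Prop :=
  forall i : 'I_m, aTx A x i <= b_eps b eps i.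

Definition in_F_eps (R : realType) (n m : nat) (A : 'M[R]_(n, m)) (b : 'cV[R]_m)
  (eps : R) (J : {set 'I_m}) : Prop :=
  J != set0 /\
  exists x : 'cV[R]_n,
    (forall i, i \in J -> aTx A x i = b_eps b eps i) /\ in_K_eps A b eps x.

Definition in_Hc (R : realType) (n m : nat) (A : 'M[R]_(n, m)) (b : 'cV[R]_m)
  (i : 'I_m) (x : 'cV[R]_n) : bool := b i 0 < aTx A x i.

Definition ind_union (R : realType) (n m : nat) (A : 'M[R]_(n, m)) (b : 'cV[R]_m)
  (x : 'cV[R]_n) : R := ([exists i, in_Hc A b i x] : bool)%:R.

Definition ind_inter (R : realType) (n m : nat) (A : 'M[R]_(n, m)) (b : 'cV[R]_m)
  (J : {set 'I_m}) (x : 'cV[R]_n) : R := ([forall i in J, in_Hc A b i x] : bool)%:R.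

From mathcomp Require Import all_boot all_order all_algebra.
From mathcomp Require Import reals boolp.
From mathcomp Require Import ring lra.
Set Implicit Arguments. Unset Strict Implicit. Unset Printing Implicit Defensive.
Import Order.TTheory GRing.Theory Num.Theory.
Local Open Scope ring_scope.

(* With g_i(y) = a_i^T y - b_i(eps) we have K(eps) = {g <= 0}, and for eps
   small the constraints violated by x are W = {i | 0 < g_i x}, so the
   right-hand side is the alternating sum, over the nonempty J \subset W, of
   the feasibility of the face {g_J = 0}. More generally, for affine g and a
   point p tight on T, nonnegative on W and positive only on W, the alternating
   sum over J \subset W of the feasibility of the face J \cup T is
   [W = set0] times the feasibility of T. Removing some k from W splits this
   sum into those for (T, W \ k) and (T + k, W \ k), and induction on #|W|
   applies once p has been slid towards the face T until a constraint of W
   becomes tight. *)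

Section AlternatingFaceSum.

Variables (R : realFieldType) (V : lmodType R) (I : finType) (g : I -> V -> R).

Definition face_feasible (S : {set I}) : bool :=
  `[< exists y, (forall j, j \in S -> g j y = 0) /\ (forall i, g i y <= 0) >].

Definition alt_face_sum (T W : {set I}) : R :=
  \sum_(J : {set I} | J \subset W) (-1) ^+ #|J| * (face_feasible (J :|: T))%:R.

Lemma face_feasibleS (S S' : {set I}) :
  S \subset S' -> face_feasible S' -> face_feasible S.
Proof.
move=> /subsetP sSS' /asboolP[y [tight_y feas_y]].
by apply/asboolP; exists y; split=> // j /sSS'/tight_y.
Qed.

Lemma alt_face_sum_set0 (T : {set I}) :
  alt_face_sum T set0 = (face_feasible T)%:R.
Proof.
rewrite /alt_face_sum (eq_bigl (pred1 set0)) => [|J]; last by rewrite subset0.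
by rewrite big_pred1_eq cards0 expr0 mul1r set0U.
Qed.

Lemma alt_face_sum_infeasible (T W : {set I}) :
  ~~ face_feasible T -> alt_face_sum T W = 0.
Proof.
move=> infeasT; rewrite /alt_face_sum big1 // => J _.
have [feasJT|] := boolP (face_feasible (J :|: T)); last by rewrite mulr0.
by move: infeasT; rewrite (face_feasibleS (subsetUr J T) feasJT).
Qed.

Lemma alt_face_sumD1 (T W : {set I}) (k : I) : k \in W ->
  alt_face_sum T W = alt_face_sum T (W :\ k) - alt_face_sum (k |: T) (W :\ k).
Proof.
move=> kW; rewrite /alt_face_sum (bigID (fun J : {set I} => k \in J)) /= addrC.
congr (_ + _); first by apply: eq_bigl => J; rewrite subsetD1.
rewrite (reindex_onto (fun L => k |: L) (fun J => J :\ k)) /=; last first.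
  by move=> J /andP[_ kJ]; rewrite setD1K.
rewrite -sumrN; apply: eq_big => L.
  rewrite setU11 andbT subsetD1 subUset sub1set kW /=.
  congr (_ && _); have [kL|kL] := boolP (k \in L); last by rewrite setU1K ?eqxx.
  by apply/negbTE/eqP => defL; move: kL; rewrite -defL setD11.
move=> /andP[_ /eqP defL]; have kL : k \notin L by rewrite -defL setD11.
by rewrite cardsU1 kL exprS mulN1r mulNr setUCA setUA.
Qed.

Definition anchored (T W : {set I}) (p : V) : Prop :=
  [/\ forall j, j \in T -> g j p = 0,
      forall i, 0 < g i p -> i \in W
    & forall i, i \in W -> 0 <= g i p].

Lemma anchoredD1 (T W : {set I}) (k : I) (p : V) :
  g k p = 0 -> anchored T W p -> anchored T (W :\ k) p.
Proof.
move=> gk0 [tightT posW nnegW]; split=> // i.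
  move=> gi_pos; rewrite !inE posW // andbT.
  by apply: contraTneq gi_pos => ->; rewrite gk0 ltxx.
by rewrite inE => /andP[_ /nnegW].
Qed.

Lemma anchoredU1 (T W : {set I}) (k : I) (p : V) :
  g k p = 0 -> anchored T W p -> anchored (k |: T) W p.
Proof.
move=> gk0 [tightT posW nnegW]; split=> // j.
by rewrite in_setU1 => /orP[/eqP->|/tightT].
Qed.

Lemma anchored_feasible (T : {set I}) (p : V) :
  anchored T set0 p -> face_feasible T.
Proof.
move=> [tightT posW _]; apply/asboolP; exists p; split=> // i.
by rewrite leNgt; apply: contraFN (in_set0 i) => /posW.
Qed.

Hypothesis g_affine :
  forall i p z (s : R), g i (p + s *: (z - p)) = g i p + s * (g i z - g i p).

Lemma anchored_tighten (T W : {set I}) (p : V) :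
  anchored T W p -> face_feasible T -> W != set0 ->
  exists k y, [/\ k \in W, g k y = 0 & anchored T W y].
Proof.
move=> [tightT posW nnegW] /asboolP[z [tightTz feas_z]] /set0Pn[k0 k0W].
have [/existsP[k /andP[kW /eqP gk0]]|] := boolP [exists k in W, g k p == 0].
  by exists k, p.
move=> /exists_inPn nz_W.
have pos_W i : i \in W -> 0 < g i p by move=> iW; rewrite lt_def nz_W ?nnegW.
have gap_W i : i \in W -> 0 < g i p - g i z.
  by move=> /pos_W; have := feas_z i; lra.
(* the segment p + s (z - p) leaves {0 <= g_i} at s = t i *)
pose t i := g i p / (g i p - g i z).
case: (arg_minP t k0W) => k kW t_min.
pose s := t k; pose y := p + s *: (z - p).
have s_ge0 : 0 <= s by rewrite divr_ge0 // ltW ?gap_W ?pos_W.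
have s_le1 : s <= 1 by rewrite ler_pdivrMr ?gap_W // mul1r; have := feas_z k; lra.
exists k, y; split=> //.
  by rewrite g_affine /s /t; field; rewrite gt_eqF ?gap_W.
split=> [j jT|i|i iW]; rewrite g_affine.
- by rewrite tightT ?tightTz //; lra.
- apply: contraTT => iW; have gip : g i p <= 0.
    by rewrite leNgt; apply: contra iW => /posW.
  by rewrite -leNgt; have := feas_z i; nra.
- have := t_min i iW; rewrite -/s ler_pdivlMr ?gap_W //; nra.
Qed.

Lemma alt_face_sum_anchored (T W : {set I}) (p : V) : anchored T W p ->
  alt_face_sum T W = ((W == set0) && face_feasible T)%:R.
Proof.
have [N ltWN] := ubnP #|W|; elim: N => // N IHN in T W p ltWN *.
case: (eqVneq W set0) => [-> _|W0 ancW]; first by rewrite alt_face_sum_set0.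
have [feasT|] := boolP (face_feasible T); last first.
  by move=> infeasT; rewrite alt_face_sum_infeasible // andbF.
have [k [y [kW gk0 ancy]]] := anchored_tighten ancW feasT W0.
have ltWkN : (#|W :\ k| < N)%N by move: ltWN; rewrite (cardsD1 k W) kW.
have ancWk := anchoredD1 gk0 ancy.
rewrite (alt_face_sumD1 _ kW) (IHN _ _ _ ltWkN ancWk).
rewrite (IHN _ _ _ ltWkN (anchoredU1 gk0 ancWk)).
case: eqP => [Wk0|_]; last by rewrite subrr.
rewrite Wk0 in ancWk; rewrite (anchored_feasible ancWk).
by rewrite (anchored_feasible (anchoredU1 gk0 ancWk)) subrr.
Qed.

Lemma alt_face_sum_nonempty (W : {set I}) (p : V) :
  face_feasible set0 -> anchored set0 W p ->
  \sum_(J | (J != set0) && face_feasible J) (-1) ^+ #|J|.-1 * (J \subset W)%:R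
    = (W != set0)%:R :> R.
Proof.
move=> feas0 ancW; have := alt_face_sum_anchored ancW; rewrite feas0 andbT.
rewrite /alt_face_sum (bigD1 set0) ?sub0set //= setU0 cards0 expr0 mul1r feas0.
set S := \sum_(J | _) _ => sumE.
have -> : \sum_(J | (J != set0) && face_feasible J)
    (-1) ^+ #|J|.-1 * (J \subset W)%:R = - S :> R.
  rewrite /S -sumrN [LHS]big_mkcond [RHS]big_mkcond.
  apply: eq_bigr => J _; rewrite setU0.
  case: (eqVneq J set0) => [->|J0]; first by rewrite andbF.
  have cardJ : (0 < #|J|)%N by rewrite card_gt0.
  rewrite -[in RHS](prednK cardJ) exprS mulN1r.
  by case: (face_feasible J); case: (J \subset W);
    rewrite /= ?mulr0 ?mulr1 ?opprK ?oppr0.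
by move: sumE; case: (W == set0) => /= sumE; lra.
Qed.

End AlternatingFaceSum.

Lemma small_pow_lt (R : realFieldType) (I : finType) (c : I -> R) (e0 : R) :
  0 < e0 -> exists2 e, 0 < e < e0 & forall i k, 0 < c i -> e ^+ k.+1 < c i.
Proof.
move=> e0_pos; pose d := \big[Order.min/1]_(i | 0 < c i) c i.
have d_pos : 0 < d by apply/bigmin_gtP.
pose e := Order.min (e0 / 2) (Order.min (d / 2) (1 / 2)).
have e_pos : 0 < e by rewrite !lt_min !divr_gt0.
have [e_e0 e_d e_1] : [/\ e <= e0 / 2, e <= d / 2 & e <= 1 / 2].
  by rewrite !ge_min !lexx !orbT.
exists e; first by rewrite e_pos; lra.
move=> i k ci_pos; have d_ci : d <= c i by apply: bigmin_le_cond.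
have pow_e : e ^+ k.+1 <= e.
  have : e ^+ k <= 1 by rewrite exprn_ile1 ?ltW //; lra.
  by rewrite exprS; nra.
lra.
Qed.

Definition eps_slack (R : realType) (n m : nat) (A : 'M[R]_(n, m))
  (b : 'cV[R]_m) (eps : R) (i : 'I_m) (y : 'cV[R]_n) : R :=
  aTx A y i - b_eps b eps i.

Lemma eps_slack_affine (R : realType) (n m : nat) (A : 'M[R]_(n, m))
    (b : 'cV[R]_m) (eps : R) i p z (s : R) :
  eps_slack A b eps i (p + s *: (z - p))
    = eps_slack A b eps i p + s * (eps_slack A b eps i z - eps_slack A b eps i p).
Proof. by rewrite /eps_slack /aTx mulmxDr -scalemxAr mulmxBr !mxE; ring. Qed.

Lemma in_F_epsE (R : realType) (n m : nat) (A : 'M[R]_(n, m)) (b : 'cV[R]_m)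
    (eps : R) (J : {set 'I_m}) :
  in_F_eps A b eps J <-> (J != set0) && face_feasible (eps_slack A b eps) J.
Proof.
rewrite /eps_slack; split.
  move=> [J0 [y [tight_y feas_y]]]; rewrite J0; apply/asboolP.
  exists y; split=> [j /tight_y ->|i]; rewrite ?subrr // subr_le0; exact: feas_y.
move=> /andP[J0 /asboolP[y [tight_y feas_y]]]; split=> //.
exists y; split=> [j /tight_y /eqP|i]; first by rewrite subr_eq0 => /eqP.
by rewrite -subr_le0; apply: feas_y.
Qed.

Theorem theorem1 (R : realType) (n m : nat) (A : 'M[R]_(n, m)) (b : 'cV[R]_m)
  (F0 : {set {set 'I_m}}) :
  (0 < n)%N -> (0 < m)%N ->
  (forall i : 'I_m, col i A != 0) ->
  (exists x : 'cV[R]_n, forall i : 'I_m, aTx A x i <= b i 0) ->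
  (exists eps0 : R, 0 < eps0 /\
     forall eps : R, 0 < eps -> eps < eps0 ->
       forall J : {set 'I_m}, J \in F0 <-> in_F_eps A b eps J) ->
  forall x : 'cV[R]_n,
    ind_union A b x =
    \sum_(J in F0) (-1) ^+ (#|J|.-1) * ind_inter A b J x.
Proof.
move=> _ _ _ [x0 le_x0b] [e0 [e0_pos F0E]] x.
have [eps /andP[eps_pos eps_lt] eps_small] :=
  small_pow_lt (fun i => aTx A x i - b i 0) e0_pos.
have pow_pos i : 0 < eps ^+ i.+1 by rewrite exprn_gt0.
pose W := [set i | 0 < eps_slack A b eps i x].
have inW i : (i \in W) = in_Hc A b i x.
  rewrite inE /eps_slack /in_Hc /b_eps subr_gt0; apply/idP/idP => lt_b.
    by have := pow_pos i; lra.
  by have := eps_small i i; rewrite subr_gt0 => /(_ lt_b); lra.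
have feas0 : face_feasible (eps_slack A b eps) set0.
  apply/asboolP; exists x0; split=> [j|i]; first by rewrite inE.
  rewrite /eps_slack /b_eps subr_le0.
  by have := le_x0b i; have := pow_pos i; lra.
have ancW : anchored (eps_slack A b eps) set0 W x.
  by split=> [j|i|i]; rewrite ?inE // => /ltW.
have -> : ind_union A b x = (W != set0)%:R.
  rewrite /ind_union; congr (nat_of_bool _)%:R.
  by apply/existsP/set0Pn => -[i]; exists i; rewrite ?inW // -inW.
rewrite -(alt_face_sum_nonempty (@eps_slack_affine _ _ _ A b eps) feas0 ancW).
symmetry; apply: eq_big => [J|J _].
  have F0_eps := F0E eps eps_pos eps_lt J.
  by apply/idP/idP => [/F0_eps/in_F_epsE|/in_F_epsE/F0_eps].
rewrite /ind_inter; congr (_ * (nat_of_bool _)%:R).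
by apply/forall_inP/subsetP => sub i /sub; rewrite inW.
Qed.
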